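(* Let $\mathbf{F}_x,\mathbf{F}_y\in\mathbb{R}^{N\times N}$ be symmetric and negative semi-definite, and let $\Delta t>0$ be arbitrary. Let $\mathbf{U}^n=\mathbf{V}^{x,n}\mathbf{S}^n(\mathbf{V}^{y,n})^T$ with $\mathbf{V}^{x,n},\mathbf{V}^{y,n}\in\mathbb{R}^{N\times r^n}$ having orthonormal columns, and let $\mathbf{U}^{n+1}=\mathbf{V}^{x,n+1}\mathbf{S}^{n+1}(\mathbf{V}^{y,n+1})^T$ be produced from $\mathbf{U}^n$ by one step of the first-order RAIL scheme (described in the context) for the matrix differential equation $\frac{d\mathbf{U}}{dt}=\mathbf{F}_x\mathbf{U}+\mathbf{U}\mathbf{F}_y^T$. Then $\|\mathbf{U}^{n+1}\|_F\le\|\mathbf{U}^n\|_F$, i.e. the first-order RAIL scheme (based on backward Euler) is unconditionally stable in $L^2$ (equivalently, in the Frobenius norm of the solution matrix).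
   Context: The first-order RAIL (Reduced Augmentation Implicit Low-rank) scheme, based on the backward Euler discretization $\mathbf{U}^{n+1}=\mathbf{U}^n+\Delta t(\mathbf{F}_x\mathbf{U}^{n+1}+\mathbf{U}^{n+1}\mathbf{F}_y^T)$, computes $\mathbf{U}^{n+1}$ from $\mathbf{U}^n=\mathbf{V}^{x,n}\mathbf{S}^n(\mathbf{V}^{y,n})^T$ as follows. (1) K and L steps: solve the Sylvester equations $(\mathbf{I}-\Delta t\mathbf{F}_x)\mathbf{K}-\mathbf{K}\big(\Delta t(\mathbf{F}_y\mathbf{V}^{y,n})^T\mathbf{V}^{y,n}\big)=\mathbf{V}^{x,n}\mathbf{S}^n$ and $(\mathbf{I}-\Delta t\mathbf{F}_y)\mathbf{L}-\mathbf{L}\big(\Delta t(\mathbf{F}_x\mathbf{V}^{x,n})^T\mathbf{V}^{x,n}\big)=\mathbf{V}^{y,n}(\mathbf{S}^n)^T$ for $\mathbf{K},\mathbf{L}\in\mathbb{R}^{N\times r^n}$, and let $\mathbf{V}^{x}_{\ddagger},\mathbf{V}^{y}_{\ddagger}$ be the orthonormal factors of reduced QR factorizations $\mathbf{K}=\mathbf{V}^{x}_{\ddagger}\mathbf{R}$, $\mathbf{L}=\mathbf{V}^{y}_{\ddagger}\mathbf{R}'$. (2) Reduced augmentation: compute reduced QR factorizations $[\mathbf{V}^{x}_{\ddagger},\mathbf{V}^{x,n}]=\mathbf{Q}_x\mathbf{R}_x$ and $[\mathbf{V}^{y}_{\ddagger},\mathbf{V}^{y,n}]=\mathbf{Q}_y\mathbf{R}_y$;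 let $\hat r$ be the maximum of the numbers of singular values of $\mathbf{R}_x$ and of $\mathbf{R}_y$ exceeding $10^{-12}$; set $\hat{\mathbf{V}}^{x}=\mathbf{Q}_x$ times the first $\hat r$ left singular vectors of $\mathbf{R}_x$, and $\hat{\mathbf{V}}^{y}=\mathbf{Q}_y$ times the first $\hat r$ left singular vectors of $\mathbf{R}_y$ (both have orthonormal columns). (3) S step (Galerkin projection): solve the Sylvester equation $\big(\mathbf{I}-\Delta t(\hat{\mathbf{V}}^{x})^T\mathbf{F}_x\hat{\mathbf{V}}^{x}\big)\hat{\mathbf{S}}-\hat{\mathbf{S}}\big(\Delta t(\mathbf{F}_y\hat{\mathbf{V}}^{y})^T\hat{\mathbf{V}}^{y}\big)=(\hat{\mathbf{V}}^{x})^T\mathbf{V}^{x,n}\mathbf{S}^n(\mathbf{V}^{y,n})^T\hat{\mathbf{V}}^{y}$ for $\hat{\mathbf{S}}\in\mathbb{R}^{\hat r\times\hat r}$. (4) Truncation: compute the SVD $\hat{\mathbf{S}}=\mathbf{A}\boldsymbol{\Sigma}\mathbf{B}^T$, let $r^{n+1}$ be the number of singular values larger than a tolerance $\epsilon>0$, and set $\mathbf{V}^{x,n+1}=\hat{\mathbf{V}}^{x}\mathbf{A}(:,1\!:\!r^{n+1})$, $\mathbf{S}^{n+1}=\boldsymbol{\Sigma}(1\!:\!r^{n+1},1\!:\!r^{n+1})$, $\mathbf{V}^{y,n+1}=\hat{\mathbf{V}}^{y}\mathbf{B}(:,1\!:\!r^{n+1})$. Here $\|\cdot\|_F$ is the Frobenius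 norm. *)

From HB Require Import structures.
From mathcomp Require Import all_boot all_order all_algebra.
Set Implicit Arguments. Unset Strict Implicit. Unset Printing Implicit Defensive.
Import Order.TTheory GRing.Theory Num.Theory.
Local Open Scope ring_scope.

Section RAILDefs.
Variable R : rcfType.

Definition orthonormal_cols m n (V : 'M[R]_(m, n)) : Prop := V^T *m V = 1%:M.

Definition upper_tri m n (A : 'M[R]_(m, n)) : Prop :=
  forall (i : 'I_m) (j : 'I_n), (j < i)%N -> A i j = 0.

Definition is_reduced_QR m n p (A : 'M[R]_(m, n)) (Q : 'M[R]_(m, p)) (Rf : 'M[R]_(p, n)) : Prop :=
  orthonormal_cols Q /\ upper_tri Rf /\ A = Q *m Rf.

Definition svd_diag m n (s : nat -> R) : 'M[R]_(m, n) :=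
  \matrix_(i < m, j < n) (if val i == val j then s (val i) else 0).

(* full SVD  A = U Sigma W^T, singular values s 0 >= s 1 >= ... >= 0
   (the minn m n first values of s are the singular values) *)
Definition is_svd m n (A : 'M[R]_(m, n)) (U : 'M[R]_m) (s : nat -> R) (W : 'M[R]_n) : Prop :=
  [/\ orthonormal_cols U, orthonormal_cols W,
      (forall k, (k < minn m n)%N -> 0 <= s k),
      (forall k l, (k <= l)%N -> (l < minn m n)%N -> s l <= s k)
    & A = U *m svd_diag m n s *m W^T].

Definition num_sv_gt m n (s : nat -> R) (tol : R) : nat :=
  count (fun k => tol < s k) (iota 0 (minn m n)).

(* first k columns of A (meaningful when k <= n) *)
Definition firstcols m n k (A : 'M[R]_(m, n)) : 'M[R]_(m, k) :=
  \matrix_(i < m, j < k)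
    (if (insub (val j) : option 'I_n) is Some j' then A i j' else 0).

Definition frob m n (A : 'M[R]_(m, n)) : R :=
  Num.sqrt (\sum_(i < m) \sum_(j < n) A i j ^+ 2).

Definition sym_nsd N (F : 'M[R]_N) : Prop :=
  F^T = F /\ forall v : 'cV[R]_N, (v^T *m F *m v) 0 0 <= 0.

End RAILDefs.

(* The S step is a backward Euler step for the Galerkin-projected equation
   dS/dt = A S + S B with A = Vx^T Fx Vx and B = Vy^T Fy Vy negative
   semi-definite. Pairing the step with S therefore gives
   <S, M> = |S|^2 - dt tr(S^T A S) - dt tr(S B S^T) >= |S|^2 for its
   right-hand side M, whence |S| <= |M|. Since the bases are orthonormal,
   M = Vx^T U^n Vy is an orthogonal compression of U^n, so |M| <= |U^n|;
   truncation only discards singular values, and multiplying by matrices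
   with orthonormal columns preserves the Frobenius norm. *)
From HB Require Import structures.
From mathcomp Require Import all_boot all_order all_algebra.
From mathcomp Require Import lra.
Import Order.TTheory GRing.Theory Num.Theory.
Local Open Scope ring_scope.
Set Implicit Arguments. Unset Strict Implicit.

Section FrobeniusInnerProduct.
Variable R : rcfType.

Definition mxdot m n (X Y : 'M[R]_(m, n)) : R := \tr (X^T *m Y).

Lemma mxdotC m n (X Y : 'M[R]_(m, n)) : mxdot X Y = mxdot Y X.
Proof. by rewrite /mxdot -mxtrace_tr trmx_mul trmxK. Qed.

Lemma mxdot_tr m n (X Y : 'M[R]_(m, n)) : mxdot X^T Y^T = mxdot Y X.
Proof. by rewrite /mxdot trmxK mxtrace_mulC. Qed.

Lemma mxdotBl m n (X Y Z : 'M[R]_(m, n)) :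
  mxdot (X - Y) Z = mxdot X Z - mxdot Y Z.
Proof. by rewrite /mxdot linearB mulmxBl linearB. Qed.

Lemma mxdotBr m n (X Y Z : 'M[R]_(m, n)) :
  mxdot X (Y - Z) = mxdot X Y - mxdot X Z.
Proof. by rewrite /mxdot mulmxBr linearB. Qed.

Lemma mxdot_sumsq m n (X : 'M[R]_(m, n)) :
  mxdot X X = \sum_(i < m) \sum_(j < n) X i j ^+ 2.
Proof.
rewrite /mxdot /mxtrace exchange_big; apply: eq_bigr => j _.
by rewrite mxE; apply: eq_bigr => i _; rewrite !mxE expr2.
Qed.

Lemma mxdot_ge0 m n (X : 'M[R]_(m, n)) : 0 <= mxdot X X.
Proof. by rewrite mxdot_sumsq; do 2!(apply: sumr_ge0 => ? _); exact: sqr_ge0. Qed.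

Lemma frobE m n (X : 'M[R]_(m, n)) : frob X = Num.sqrt (mxdot X X).
Proof. by rewrite mxdot_sumsq. Qed.

Lemma frob2_le_of_mxdot m n (S M : 'M[R]_(m, n)) :
  mxdot S S <= mxdot S M -> mxdot S S <= mxdot M M.
Proof.
have := mxdot_ge0 (M - S).
rewrite mxdotBl !mxdotBr (mxdotC M S); lra.
Qed.

Lemma orthonormal_mul m k p (P : 'M[R]_(m, k)) (C : 'M[R]_(k, p)) :
  orthonormal_cols P -> orthonormal_cols C -> orthonormal_cols (P *m C).
Proof.
by move=> hP hC; rewrite /orthonormal_cols trmx_mul -mulmxA (mulmxA P^T) hP mul1mx.
Qed.

Lemma mxdot_orthonormal_mull m k n (P : 'M[R]_(m, k)) (X Y : 'M[R]_(k, n)) :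
  orthonormal_cols P -> mxdot (P *m X) (P *m Y) = mxdot X Y.
Proof. by move=> hP; rewrite /mxdot trmx_mul -mulmxA (mulmxA P^T) hP mul1mx. Qed.

Lemma mxdot_orthonormal_mulr m k n (Q : 'M[R]_(n, k)) (X Y : 'M[R]_(m, k)) :
  orthonormal_cols Q -> mxdot (X *m Q^T) (Y *m Q^T) = mxdot X Y.
Proof.
move=> hQ; rewrite -[LHS]mxdot_tr !trmx_mul !trmxK.
by rewrite mxdot_orthonormal_mull // mxdot_tr.
Qed.

Lemma frob2_orthonormal_mul2 m k l n (P : 'M[R]_(m, k)) (Q : 'M[R]_(n, l))
    (X : 'M[R]_(k, l)) :
  orthonormal_cols P -> orthonormal_cols Q ->
  mxdot (P *m X *m Q^T) (P *m X *m Q^T) = mxdot X X.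
Proof.
by move=> hP hQ; rewrite mxdot_orthonormal_mulr // mxdot_orthonormal_mull.
Qed.

(* [1 - P P^T] is the orthogonal projector onto the complement of the range
   of [P], and [|X|^2 - |P^T X|^2] is the squared norm of the projection. *)
Lemma frob2_compressl_le m k n (P : 'M[R]_(m, k)) (X : 'M[R]_(m, n)) :
  orthonormal_cols P -> mxdot (P^T *m X) (P^T *m X) <= mxdot X X.
Proof.
move=> hP; set E := 1%:M - P *m P^T.
have E_sym : E^T = E.
  by rewrite /E linearB /= trmx1 trmx_mul trmxK.
have E_idem : E *m E = E.
  rewrite /E mulmxBl mul1mx mulmxBr mulmx1 mulmxA -(mulmxA P) hP mulmx1.
  by rewrite subrr subr0.
have defE : mxdot X X - mxdot (P^T *m X) (P^T *m X) = mxdot (E *m X) (E *m X).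
  rewrite /mxdot [(E *m X)^T]trmx_mul E_sym -mulmxA (mulmxA E) E_idem /E.
  by rewrite mulmxBl mul1mx mulmxBr linearB trmx_mul trmxK !mulmxA.
by rewrite -subr_ge0 defE mxdot_ge0.
Qed.

Lemma frob2_compress_le m n k l (P : 'M[R]_(m, k)) (Q : 'M[R]_(n, l))
    (X : 'M[R]_(m, n)) :
  orthonormal_cols P -> orthonormal_cols Q ->
  mxdot (P^T *m X *m Q) (P^T *m X *m Q) <= mxdot X X.
Proof.
move=> hP hQ; rewrite -mxdot_tr trmx_mul.
apply: le_trans (frob2_compressl_le _ hQ) _.
by rewrite mxdot_tr frob2_compressl_le.
Qed.

End FrobeniusInnerProduct.

Section BackwardEulerStep.
Variable R : rcfType.

Lemma nsd_mxtrace_le0 N k (F : 'M[R]_N) (Y : 'M[R]_(N, k)) :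
  sym_nsd F -> \tr (Y^T *m F *m Y) <= 0.
Proof.
move=> [_ F_nsd]; apply: sumr_le0 => j _.
have -> : (Y^T *m F *m Y) j j = ((col j Y)^T *m F *m col j Y) 0 0.
  rewrite !mxE; apply: eq_bigr => i _; rewrite !mxE; congr (_ * _).
  by apply: eq_bigr => l _; rewrite !mxE.
exact: F_nsd.
Qed.

Lemma sym_nsd_compress N k (F : 'M[R]_N) (P : 'M[R]_(N, k)) :
  sym_nsd F -> sym_nsd (P^T *m F *m P).
Proof.
move=> [F_sym F_nsd]; split; first by rewrite !trmx_mul trmxK F_sym mulmxA.
move=> v; have -> : v^T *m (P^T *m F *m P) *m v = (P *m v)^T *m F *m (P *m v).
  by rewrite trmx_mul !mulmxA.
exact: F_nsd.
Qed.

Lemma backward_euler_sylvester_frob2 k l (A : 'M[R]_k) (B : 'M[R]_l) (dt : R)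
    (S M : 'M[R]_(k, l)) :
  sym_nsd A -> sym_nsd B -> 0 <= dt ->
  (1%:M - dt *: A) *m S - S *m (dt *: B) = M -> mxdot S S <= mxdot M M.
Proof.
move=> A_nsd B_nsd dt_ge0 <-; apply: frob2_le_of_mxdot.
have trA := nsd_mxtrace_le0 S A_nsd.
have trB := nsd_mxtrace_le0 S^T B_nsd; rewrite trmxK in trB.
have -> : mxdot S ((1%:M - dt *: A) *m S - S *m (dt *: B))
    = mxdot S S - dt * \tr (S^T *m A *m S) - dt * \tr (S *m B *m S^T).
  rewrite mxdotBr mulmxBl mul1mx mxdotBr -scalemxAl -scalemxAr /mxdot !linearZ /=.
  by rewrite !mulmxA -[S^T *m S *m B]mulmxA [\tr (S^T *m (S *m B))]mxtrace_mulC.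
nra.
Qed.

End BackwardEulerStep.

Section TruncatedBases.
Variable R : rcfType.

Lemma firstcols_widen m n k (A : 'M[R]_(m, n)) (le_kn : (k <= n)%N) :
  firstcols k A = \matrix_(i, j) A i (widen_ord le_kn j).
Proof.
apply/matrixP => i j; rewrite !mxE.
case: insubP => [j' _ val_j'|]; last by rewrite /= (leq_trans (ltn_ord j)).
by congr (A i _); apply: val_inj; rewrite val_j'.
Qed.

Lemma orthonormal_firstcols m n k (A : 'M[R]_(m, n)) :
  (k <= n)%N -> orthonormal_cols A -> orthonormal_cols (firstcols k A).
Proof.
move=> le_kn hA; rewrite (firstcols_widen _ le_kn); apply/matrixP => i j.
have := congr1 (fun M : 'M[R]_n => M (widen_ord le_kn i) (widen_ord le_kn j)) hA.
by rewrite !mxE => <-; apply: eq_bigr => l _; rewrite !mxE.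
Qed.

Lemma num_sv_gt_le_minn m n (s : nat -> R) (tol : R) :
  (num_sv_gt m n s tol <= minn m n)%N.
Proof. by rewrite /num_sv_gt -[X in (_ <= X)%N](size_iota 0) count_size. Qed.

Lemma mxdot_svd_diag n (s : nat -> R) :
  mxdot (svd_diag n n s) (svd_diag n n s) = \sum_(0 <= i < n) s i ^+ 2.
Proof.
rewrite mxdot_sumsq big_mkord; apply: eq_bigr => i _.
rewrite (bigD1 i) //= big1 ?addr0 => [|j ne_ji]; first by rewrite mxE eqxx.
by rewrite mxE (inj_eq val_inj) eq_sym (negbTE ne_ji) expr0n.
Qed.

Lemma frob2_svd_diag_le k n (s : nat -> R) : (k <= n)%N ->
  mxdot (svd_diag k k s) (svd_diag k k s) <= mxdot (svd_diag n n s) (svd_diag n n s).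
Proof.
move=> le_kn; rewrite !mxdot_svd_diag (big_cat_nat (leq0n k) le_kn) /= lerDl.
by apply: sumr_ge0 => i _; exact: sqr_ge0.
Qed.

End TruncatedBases.

Theorem mainTheorem1 (R : rcfType) (N r : nat)
  (Fx Fy : 'M[R]_N) (dt : R)
  (Vxn Vyn : 'M[R]_(N, r)) (Sn : 'M[R]_r)
  (* (1) K and L steps *)
  (K L Vxd Vyd : 'M[R]_(N, r)) (RK RL : 'M[R]_r)
  (* (2) reduced augmentation *)
  (Qx Qy : 'M[R]_(N, minn N (r + r))) (Rx Ry : 'M[R]_(minn N (r + r), r + r))
  (Ux Uy : 'M[R]_(minn N (r + r))) (sx sy : nat -> R) (Wx Wy : 'M[R]_(r + r))
  (rh : nat) (Vxh Vyh : 'M[R]_(N, rh))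
  (* (3) S step *)
  (Sh : 'M[R]_rh)
  (* (4) truncation *)
  (eps : R) (A B : 'M[R]_rh) (sS : nat -> R) (r1 : nat)
  (Vx1 Vy1 : 'M[R]_(N, r1)) (S1 : 'M[R]_r1) :
  sym_nsd Fx -> sym_nsd Fy -> 0 < dt ->
  orthonormal_cols Vxn -> orthonormal_cols Vyn ->
  (1%:M - dt *: Fx) *m K - K *m (dt *: ((Fy *m Vyn)^T *m Vyn)) = Vxn *m Sn ->
  (1%:M - dt *: Fy) *m L - L *m (dt *: ((Fx *m Vxn)^T *m Vxn)) = Vyn *m Sn^T ->
  is_reduced_QR K Vxd RK -> is_reduced_QR L Vyd RL ->
  is_reduced_QR (row_mx Vxd Vxn) Qx Rx -> is_reduced_QR (row_mx Vyd Vyn) Qy Ry ->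
  is_svd Rx Ux sx Wx -> is_svd Ry Uy sy Wy ->
  rh = maxn (num_sv_gt (minn N (r + r)) (r + r) sx (10%:R ^- 12))
            (num_sv_gt (minn N (r + r)) (r + r) sy (10%:R ^- 12)) ->
  Vxh = Qx *m firstcols rh Ux -> Vyh = Qy *m firstcols rh Uy ->
  (1%:M - dt *: (Vxh^T *m Fx *m Vxh)) *m Sh - Sh *m (dt *: ((Fy *m Vyh)^T *m Vyh))
    = Vxh^T *m Vxn *m Sn *m Vyn^T *m Vyh ->
  0 < eps -> is_svd Sh A sS B ->
  r1 = num_sv_gt rh rh sS eps ->
  Vx1 = Vxh *m firstcols r1 A -> S1 = svd_diag r1 r1 sS -> Vy1 = Vyh *m firstcols r1 B ->
  frob (Vx1 *m S1 *m Vy1^T) <= frob (Vxn *m Sn *m Vyn^T).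
Proof.
move=> Fx_nsd Fy_nsd dt_gt0 _ _ _ _ _ _ [hQx _] [hQy _] [hUx _ _ _ _] [hUy _ _ _ _]
  def_rh -> -> S_step _ [hA hB _ _ def_Sh] def_r1 -> -> ->.
have le_rh : (rh <= minn N (r + r))%N.
  by rewrite def_rh geq_max !(leq_trans (num_sv_gt_le_minn _ _ _ _)) ?geq_minl.
have le_r1 : (r1 <= rh)%N.
  by rewrite def_r1 (leq_trans (num_sv_gt_le_minn _ _ _ _)) ?geq_minl.
set P := Qx *m firstcols rh Ux; set Q := Qy *m firstcols rh Uy.
have hP : orthonormal_cols P := orthonormal_mul hQx (orthonormal_firstcols le_rh hUx).
have hQ : orthonormal_cols Q := orthonormal_mul hQy (orthonormal_firstcols le_rh hUy).
have Sh_le : mxdot Sh Sh <= mxdot (Vxn *m Sn *m Vyn^T) (Vxn *m Sn *m Vyn^T).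
  apply: le_trans (frob2_compress_le _ hP hQ).
  have FyQ : (Fy *m Q)^T *m Q = Q^T *m Fy *m Q by rewrite trmx_mul Fy_nsd.1.
  apply: (backward_euler_sylvester_frob2 (sym_nsd_compress P Fx_nsd)
           (sym_nsd_compress Q Fy_nsd) (ltW dt_gt0)).
  by rewrite -FyQ S_step !mulmxA.
rewrite !frobE ler_sqrt ?mxdot_ge0 // frob2_orthonormal_mul2; first last.
- exact/orthonormal_mul/orthonormal_firstcols.
- exact/orthonormal_mul/orthonormal_firstcols.
apply: le_trans (frob2_svd_diag_le _ le_r1) _.
rewrite -(frob2_orthonormal_mul2 _ hA hB) -def_Sh; exact: Sh_le.
Qed.
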